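(* Let $\phi_*\in(0,\pi/2)$, $R\ge33.2r$, and consider the billiard map on $Q(\phi_*,R)$. For $x\in M_r$ with $n_1\ge2$, letting $\tau_0=|p(x_0)p(x_1)|$ and $\tau_1=|p(F^{n_1}x_1)p(x_2)|$, one has $$\tau_0<\tfrac23 d_0+\tfrac23 d_1\quad\text{and}\quad\tau_1<\tfrac23 d_1+\tfrac23 d_2.$$
   Context: Setting: $r=1$, $Q(\phi_*,R)=D(O_r,r)\cap D(O_R,R)$ with $|O_rO_R|=\sqrt{R^2-r^2\sin^2\phi_*}-r\cos\phi_*$; boundary arcs $\Gamma_r\subset\partial D(O_r,r)$ (position angles $[\phi_*,2\pi-\phi_*]$) and $\Gamma_R\subset\partial D(O_R,R)$. Phase space $M=M_r\sqcup M_R$, coordinates $(\phi,\theta)$ with $\theta\in(0,\pi)$ the angle from the positive tangent direction; $p(x)$ the base point; $F$ the billiard map. $M_r^{out}=M_r\cap F^{-1}(M_R)$, $M_R^{out}=M_R\cap F^{-1}(M_r)$. For $x\in M_r$: $x_0=F^{n_0}x$ with $n_0=\inf\{n\ge0:F^nx\in M_r^{out}\}$, $x_1=Fx_0$, $n_1=\inf\{n\ge0:F^nx_1\in M_R^{out}\}$, $x_2=F^{n_1+1}x_1$; $d_0=r\sin\theta(x_0)$, $d_1=R\sin\theta(x_1)$, $d_2=r\sin\theta(x_2)$. *)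

From Stdlib Require Import Reals Lra.
Open Scope R_scope.

(* Billiard in the lens Q(phi_star, R) = D(O_r, r) /\ D(O_R, R), with r = 1.
   Coordinates: O_r = (0,0), O_R = (-|O_r O_R|, 0), so that the corners are
   O_r + r(cos phi_star, +- sin phi_star) and Gamma_r has position angles
   [phi_star, 2pi - phi_star]. *)

Definition rr : R := 1.

Definition dOO (phis Rb : R) : R :=
  sqrt (Rb ^ 2 - rr ^ 2 * (sin phis) ^ 2) - rr * cos phis.

Inductive side := Sr | SR.

Definition other (s : side) : side := match s with Sr => SR | SR => Sr end.

Definition center (phis Rb : R) (s : side) : R * R :=
  match s with Sr => (0, 0) | SR => (- dOO phis Rb, 0) end.

Definition radius (Rb : R) (s : side) : R :=
  match s with Sr => rr | SR => Rb end.

(* A phase point: which arc (M_r or M_R), position angle phi (w.r.t. the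
   centre of that arc's circle), and theta in (0,pi), the angle from the
   positive (counterclockwise) tangent direction. *)
Record state := mkState { sd : side; phi : R; theta : R }.

Definition edist (p q : R * R) : R :=
  sqrt ((fst p - fst q) ^ 2 + (snd p - snd q) ^ 2).

Definition base (phis Rb : R) (x : state) : R * R :=
  (fst (center phis Rb (sd x)) + radius Rb (sd x) * cos (phi x),
   snd (center phis Rb (sd x)) + radius Rb (sd x) * sin (phi x)).

(* outgoing unit direction: cos theta * T + sin theta * N_in, with
   T = (-sin phi, cos phi) the positive tangent, N_in = -(cos phi, sin phi). *)
Definition dir (x : state) : R * R :=
  (cos (theta x) * (- sin (phi x)) + sin (theta x) * (- cos (phi x)),
   cos (theta x) * cos (phi x) + sin (theta x) * (- sin (phi x))).

(* base point lies on the closed arc Gamma_{sd x} (possibly a corner) *)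
Definition on_arc_closed (phis Rb : R) (x : state) : Prop :=
  edist (base phis Rb x) (center phis Rb (other (sd x))) <= radius Rb (other (sd x)).

Definition on_arc_open (phis Rb : R) (x : state) : Prop :=
  edist (base phis Rb x) (center phis Rb (other (sd x))) < radius Rb (other (sd x)).

Definition reflect_at (y : state) (v : R * R) : R * R :=
  let n := (cos (phi y), sin (phi y)) in
  let dt := fst v * fst n + snd v * snd n in
  (fst v - 2 * dt * fst n, snd v - 2 * dt * snd n).

(* Fstep x y  <->  y = F x  (billiard map; defined when the next collision
   is not at a corner).  Since Q is strictly convex, the point of the
   forward ray on the boundary with t > 0 is unique, namely the next
   collision point. *)
Definition Fstep (phis Rb : R) (x y : state) : Prop :=
  0 < theta x < PI /\ 0 < theta y < PI /\
  on_arc_closed phis Rb x /\ on_arc_open phis Rb y /\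
  (exists t : R, 0 < t /\
     base phis Rb y = (fst (base phis Rb x) + t * fst (dir x),
                       snd (base phis Rb x) + t * snd (dir x))) /\
  dir y = reflect_at y (dir x).

Definition in_Mr_out (xs : nat -> state) (k : nat) : Prop :=
  sd (xs k) = Sr /\ sd (xs (S k)) = SR.

Definition in_MR_out (xs : nat -> state) (k : nat) : Prop :=
  sd (xs k) = SR /\ sd (xs (S k)) = Sr.

(* Seen from O_R, Γ_R consists of the
   position angles |φ| < a, where a < π/6 and R ≤ 2 D cos a for R ≥ 33.2.  Along
   Γ_R the billiard keeps θ and advances φ by 2θ.  For the chord from x_0 into
   x_1 = (φ, θ), n_1 ≥ 2 puts φ, φ + 2θ, φ + 4θ in Γ_R, while φ - 2θ, the other end
   of the chord's line on the big circle, lies outside it; with a < π/6 this forces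
   (up to θ ↦ π - θ) θ < a and 2 cos a sin θ < sin (θ - φ).  The chord length t is
   the positive root of t^2 - 2bt + g with b = R sin θ - D sin (θ - φ), g < 0, and
   d_0 = t - b, so the claim τ_0 < 2/3 (d_0 + d_1) reads t < 2 D sin (θ - φ), which
   follows from the sign of the quadratic there.  The last chord is the mirror image
   of a first chord, traversed backwards. *)

From Stdlib Require Import Reals Lra Lia.
Open Scope R_scope.

Lemma cos_sin_sq α : cos α ^ 2 + sin α ^ 2 = 1.
Proof. rewrite <- (sin2_cos2 α); unfold Rsqr; ring. Qed.

Definition angle_eq (α β : R) : Prop := cos α = cos β /\ sin α = sin β.

Lemma angle_eq_refl α : angle_eq α α.
Proof. split; reflexivity. Qed.

Lemma angle_eq_sym α β : angle_eq α β -> angle_eq β α.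
Proof. intros [Hc Hs]; split; auto. Qed.

Lemma angle_eq_trans α β γ : angle_eq α β -> angle_eq β γ -> angle_eq α γ.
Proof. intros [Hc Hs] [Hc' Hs']; split; congruence. Qed.

Lemma angle_eq_add α α' β β' :
  angle_eq α α' -> angle_eq β β' -> angle_eq (α + β) (α' + β').
Proof.
  intros [Hc Hs] [Hc' Hs']; split;
    rewrite ?cos_plus, ?sin_plus, Hc, Hs, Hc', Hs'; reflexivity.
Qed.

Lemma angle_eq_opp α α' : angle_eq α α' -> angle_eq (- α) (- α').
Proof. intros [Hc Hs]; split; rewrite ?cos_neg, ?sin_neg; congruence. Qed.

Lemma angle_eq_mul_nat (n : nat) α α' :
  angle_eq α α' -> angle_eq (INR n * α) (INR n * α').
Proof.
  intros H; induction n as [|n IH].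
  - simpl; rewrite !Rmult_0_l; apply angle_eq_refl.
  - rewrite S_INR, !Rmult_plus_distr_r, !Rmult_1_l; now apply angle_eq_add.
Qed.

Lemma angle_eq_asin_sin φ : 0 <= cos φ -> angle_eq (asin (sin φ)) φ.
Proof.
  intros Hc.
  assert (Hb := SIN_bound φ).
  split; [|now apply sin_asin].
  rewrite cos_asin by exact Hb.
  rewrite <- (sqrt_Rsqr (cos φ)) by exact Hc.
  f_equal; rewrite <- (sin2_cos2 φ); ring.
Qed.

Lemma cos_lt_cos_bound a x :
  0 <= a <= PI -> - PI <= x <= PI -> cos a < cos x -> - a < x < a.
Proof.
  intros Ha Hx Hc; split.
  - destruct (Rlt_or_le (- a) x) as [h|h]; [exact h|].
    destruct (Rle_lt_or_eq_dec _ _ h) as [h'|h'].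
    + assert (cos (- x) < cos a) by (apply cos_decreasing_1; lra).
      rewrite cos_neg in H; lra.
    + rewrite h', cos_neg in Hc; lra.
  - destruct (Rlt_or_le x a) as [h|h]; [exact h|].
    destruct (Rle_lt_or_eq_dec _ _ h) as [h'|h'].
    + assert (cos x < cos a) by (apply cos_decreasing_1; lra); lra.
    + rewrite h' in Hc; lra.
Qed.

Lemma cos_lt_cos_of_bound a x : a <= PI -> - a < x < a -> cos a < cos x.
Proof.
  intros Ha Hx; destruct (Rle_or_lt 0 x) as [h|h].
  - apply cos_decreasing_1; lra.
  - rewrite <- (cos_neg x); apply cos_decreasing_1; lra.
Qed.

Lemma small_rotation_bound a φ θ :
  0 < a < PI / 6 -> 0 < θ < a -> - a < φ < a ->
  cos a < cos (φ + 4 * θ) -> cos (φ - 2 * θ) <= cos a ->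
  2 * cos a * sin θ < sin (θ - φ).
Proof.
  intros Ha Hθ Hφ H4 H2.
  assert (HPI := PI_RGT_0).
  assert (Hfwd : φ + 4 * θ < a) by (apply (cos_lt_cos_bound a); lra).
  assert (Hback : φ - 2 * θ <= - a).
  { destruct (Rle_or_lt (φ - 2 * θ) (- a)) as [h|h]; [exact h|].
    assert (cos a < cos (φ - 2 * θ)) by (apply cos_lt_cos_of_bound; lra); lra. }
  assert (Hsin2 : sin (2 * θ) < sin (θ - φ)) by (apply sin_increasing_1; lra).
  assert (Hcos : cos a < cos θ) by (apply cos_decreasing_1; lra).
  assert (Hs : 0 < sin θ) by (apply sin_gt_0; lra).
  rewrite sin_2a in Hsin2; nra.
Qed.

Lemma principal_rotation_bound a φ θ :
  0 < a < PI / 6 -> 0 < θ < PI -> - (PI / 2) <= φ <= PI / 2 ->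
  cos a < cos φ -> cos a < cos (φ + 2 * θ) -> cos a < cos (φ + 4 * θ) ->
  cos (φ - 2 * θ) <= cos a ->
  2 * cos a * sin θ < sin (θ - φ).
Proof.
  intros Ha Hθ Hφ H0 H2 H4 Hb.
  assert (HPI := PI_RGT_0).
  assert (Hφa : - a < φ < a) by (apply cos_lt_cos_bound; lra).
  assert (Hcases : θ < a \/ PI - a < θ).
  { destruct (Rlt_or_le (φ + 2 * θ) a) as [h|h]; [left; lra|].
    destruct (Rle_or_lt (φ + 2 * θ) PI) as [h'|h'].
    - destruct (Rle_lt_or_eq_dec _ _ h) as [e|e].
      + assert (cos (φ + 2 * θ) < cos a) by (apply cos_decreasing_1; lra); lra.
      + rewrite <- e in H2; lra.
    - destruct (Rlt_or_le (2 * PI - a) (φ + 2 * θ)) as [h''|h'']; [right; lra|].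
      assert (E : cos (φ + 2 * θ) = cos (2 * PI - (φ + 2 * θ))).
      { rewrite cos_minus, cos_2PI, sin_2PI; ring. }
      destruct (Rle_lt_or_eq_dec _ _ h'') as [e|e].
      + assert (cos (2 * PI - (φ + 2 * θ)) < cos a) by (apply cos_decreasing_1; lra); lra.
      + rewrite E, e in H2; replace (2 * PI - (2 * PI - a)) with a in H2 by ring; lra. }
  destruct Hcases as [Hsmall|Hlarge].
  - apply small_rotation_bound; lra.
  - (* the mirror image θ ↦ π - θ, φ ↦ -φ of a small rotation *)
    assert (Hper : forall x (k : nat), cos (x + 2 * INR k * PI) = cos x) by apply cos_period.
    assert (Hmirror := small_rotation_bound a (- φ) (PI - θ) Ha ltac:(lra) ltac:(lra)).
    replace (- φ + 4 * (PI - θ)) with (- (φ + 4 * θ) + 2 * INR 2 * PI) in Hmirror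
      by (simpl; ring).
    replace (- φ - 2 * (PI - θ)) with (- (φ - 2 * θ + 2 * INR 1 * PI)) in Hmirror
      by (simpl; ring).
    replace (PI - θ - - φ) with (PI - (θ - φ)) in Hmirror by ring.
    rewrite !cos_neg, !Hper, cos_neg, !sin_PI_x in Hmirror.
    now apply Hmirror.
Qed.

Lemma arc_rotation_bound a φ θ :
  0 < a < PI / 6 -> 0 < θ < PI ->
  cos a < cos φ -> cos a < cos (φ + 2 * θ) -> cos a < cos (φ + 4 * θ) ->
  cos (φ - 2 * θ) <= cos a ->
  2 * cos a * sin θ < sin (θ - φ).
Proof.
  intros Ha Hθ H0 H2 H4 Hb.
  assert (Hca : 0 < cos a) by (apply cos_gt_0; assert (HPI := PI_RGT_0); lra).
  (* the hypotheses see φ only modulo 2π: replace it by a representative in [-π/2, π/2] *)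
  assert (Hp := angle_eq_asin_sin φ ltac:(lra)).
  set (p := asin (sin φ)) in Hp.
  assert (Hshift : forall c, cos (p + c) = cos (φ + c)).
  { intro c; apply (angle_eq_add _ _ _ _ Hp (angle_eq_refl c)). }
  replace (sin (θ - φ)) with (sin (θ - p))
    by apply (angle_eq_add _ _ _ _ (angle_eq_refl θ) (angle_eq_opp _ _ Hp)).
  apply principal_rotation_bound; try rewrite Hshift; try apply asin_bound; auto.
  - rewrite (proj1 Hp); exact H0.
  - unfold Rminus; rewrite Hshift; exact Hb.
Qed.

Lemma quadratic_factor_root b g t s :
  t ^ 2 - 2 * b * t + g = 0 ->
  t * (s ^ 2 - 2 * b * s + g) = (s - t) * (t * s - g).
Proof.
  intros Hroot.
  transitivity ((s - t) * (t * s - g) + s * (t ^ 2 - 2 * b * t + g)); [ring|].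
  rewrite Hroot; ring.
Qed.

Lemma quadratic_nonneg_beyond_root b g t s :
  g < 0 -> 0 < t -> t <= s -> t ^ 2 - 2 * b * t + g = 0 ->
  0 <= s ^ 2 - 2 * b * s + g.
Proof.
  intros Hg Ht Hts Hroot.
  assert (Hfac := quadratic_factor_root b g t s Hroot).
  assert (0 <= (s - t) * (t * s - g)) by (apply Rmult_le_pos; nra).
  nra.
Qed.

Lemma quadratic_root_lt b g t s :
  g < 0 -> 0 < t -> 0 < s -> t ^ 2 - 2 * b * t + g = 0 ->
  0 < s ^ 2 - 2 * b * s + g -> t < s.
Proof.
  intros Hg Ht Hs Hroot Hpos.
  assert (Hfac := quadratic_factor_root b g t s Hroot).
  assert (0 < t * (s ^ 2 - 2 * b * s + g)) by (apply Rmult_lt_0_compat; lra).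
  assert (0 < t * s - g) by nra.
  destruct (Rlt_or_le t s) as [h|h]; [exact h|].
  assert ((s - t) * (t * s - g) <= 0) by nra.
  lra.
Qed.

Lemma base_small phis Rb x :
  sd x = Sr -> base phis Rb x = (cos (phi x), sin (phi x)).
Proof. intros Hs; unfold base; rewrite Hs; simpl; unfold rr; f_equal; ring. Qed.

Lemma base_big phis Rb x :
  sd x = SR -> base phis Rb x = (- dOO phis Rb + Rb * cos (phi x), Rb * sin (phi x)).
Proof. intros Hs; unfold base; rewrite Hs; simpl; f_equal; ring. Qed.

Lemma edist_sq p q : edist p q ^ 2 = (fst p - fst q) ^ 2 + (snd p - snd q) ^ 2.
Proof.
  unfold edist; rewrite <- Rsqr_pow2, Rsqr_sqrt; [reflexivity|].
  apply Rplus_le_le_0_compat; apply pow2_ge_0.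
Qed.

Lemma edist_along p v t :
  fst v ^ 2 + snd v ^ 2 = 1 -> 0 <= t ->
  edist p (fst p + t * fst v, snd p + t * snd v) = t.
Proof.
  intros Hv Ht; unfold edist; cbn [fst snd].
  replace ((fst p - (fst p + t * fst v)) ^ 2 + (snd p - (snd p + t * snd v)) ^ 2)
    with (t ^ 2 * (fst v ^ 2 + snd v ^ 2)) by ring.
  rewrite Hv, Rmult_1_r; now apply sqrt_pow2.
Qed.

Lemma dir_angle x : dir x = (- sin (phi x + theta x), cos (phi x + theta x)).
Proof. unfold dir; rewrite sin_plus, cos_plus; f_equal; ring. Qed.

Lemma dir_unit x : fst (dir x) ^ 2 + snd (dir x) ^ 2 = 1.
Proof. rewrite dir_angle; cbn [fst snd]; rewrite <- (cos_sin_sq (phi x + theta x)); ring. Qed.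

Lemma reflect_at_involutive y v : reflect_at y (reflect_at y v) = v.
Proof.
  destruct v as [v1 v2]; unfold reflect_at; cbn [fst snd].
  assert (Hn := cos_sin_sq (phi y)).
  set (c := cos (phi y)) in *; set (s := sin (phi y)) in *.
  set (d := v1 * c + v2 * s).
  replace ((v1 - 2 * d * c) * c + (v2 - 2 * d * s) * s) with (d - 2 * d * (c ^ 2 + s ^ 2))
    by (unfold d; ring).
  rewrite Hn; f_equal; ring.
Qed.

Lemma reflect_at_dir y :
  reflect_at y (dir y) = (sin (theta y - phi y), cos (theta y - phi y)).
Proof.
  unfold reflect_at; rewrite dir_angle; cbn [fst snd].
  replace (- sin (phi y + theta y) * cos (phi y) + cos (phi y + theta y) * sin (phi y))
    with (- sin (theta y)).
  2: { rewrite <- sin_neg; replace (- theta y) with (phi y - (phi y + theta y)) by ring.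
       rewrite sin_minus; ring. }
  rewrite sin_plus, cos_plus, sin_minus, cos_minus; f_equal; ring.
Qed.

Lemma incoming_dir x y :
  dir y = reflect_at y (dir x) -> dir x = (sin (theta y - phi y), cos (theta y - phi y)).
Proof. intros H; rewrite <- reflect_at_dir, H, reflect_at_involutive; reflexivity. Qed.

Lemma big_circle_step phis Rb x y :
  0 < Rb -> Fstep phis Rb x y -> sd x = SR -> sd y = SR ->
  angle_eq (phi y) (phi x + 2 * theta x) /\ angle_eq (theta y) (theta x).
Proof.
  intros HRb (_ & _ & _ & _ & (t & Ht & Hchord) & Hrefl) Hx Hy.
  assert (Hin := incoming_dir x y Hrefl).
  rewrite (base_big _ _ y Hy), (base_big _ _ x Hx), dir_angle in Hchord.
  rewrite dir_angle in Hin.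
  injection Hchord as E1 E2; injection Hin as I1 I2.
  set (α := phi x + theta x) in *.
  replace (phi x) with (α - theta x) in E1, E2 by (unfold α; ring).
  rewrite cos_minus in E1; rewrite sin_minus in E2.
  assert (Ec : Rb * cos (phi y) = Rb * (cos α * cos (theta x) + sin α * sin (theta x)) - t * sin α)
    by lra.
  assert (Es : Rb * sin (phi y) = Rb * (sin α * cos (theta x) - cos α * sin (theta x)) + t * cos α)
    by lra.
  assert (Ht2 : t = 2 * Rb * sin (theta x)).
  { assert (Hy1 := cos_sin_sq (phi y)); assert (Hα := cos_sin_sq α).
    assert (Hθ := cos_sin_sq (theta x)).
    assert (E : Rb ^ 2 * (cos (phi y) ^ 2 + sin (phi y) ^ 2)
                = Rb ^ 2 * (cos α ^ 2 + sin α ^ 2) * (cos (theta x) ^ 2 + sin (theta x) ^ 2)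
                  - 2 * t * Rb * sin (theta x) * (cos α ^ 2 + sin α ^ 2)
                  + t ^ 2 * (cos α ^ 2 + sin α ^ 2)).
    { transitivity ((Rb * cos (phi y)) ^ 2 + (Rb * sin (phi y)) ^ 2); [ring|].
      rewrite Ec, Es; ring. }
    rewrite Hy1, Hα, Hθ in E; nra. }
  assert (Hφy : angle_eq (phi y) (phi x + 2 * theta x)).
  { replace (phi x + 2 * theta x) with (α + theta x) by (unfold α; ring).
    rewrite Ht2 in Ec, Es.
    split; rewrite ?cos_plus, ?sin_plus; apply (Rmult_eq_reg_l Rb); lra. }
  split; [exact Hφy|].
  replace (theta y) with ((theta y - phi y) + phi y) by ring.
  replace (theta x) with (- α + (phi x + 2 * theta x)) by (unfold α; ring).
  apply angle_eq_add; [|exact Hφy].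
  split; [rewrite cos_neg | rewrite sin_neg]; lra.
Qed.

Lemma sin_theta_dir x : sin (theta x) = - (fst (dir x) * cos (phi x) + snd (dir x) * sin (phi x)).
Proof.
  rewrite dir_angle; cbn [fst snd].
  replace (theta x) with ((phi x + theta x) - phi x) at 1 by ring.
  rewrite sin_minus; ring.
Qed.

Lemma sq_le_of_edist_le p q ρ :
  edist p q <= ρ -> (fst p - fst q) ^ 2 + (snd p - snd q) ^ 2 <= ρ ^ 2.
Proof.
  intros H; rewrite <- edist_sq.
  assert (0 <= edist p q) by apply sqrt_pos; nra.
Qed.

Lemma sq_lt_of_edist_lt p q ρ :
  edist p q < ρ -> (fst p - fst q) ^ 2 + (snd p - snd q) ^ 2 < ρ ^ 2.
Proof.
  intros H; rewrite <- edist_sq.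
  assert (0 <= edist p q) by apply sqrt_pos; nra.
Qed.

Lemma cos_lt_first_rotations a φ θ :
  (forall j, (j <= 2)%nat -> cos a < cos (φ + 2 * INR j * θ)) ->
  cos a < cos φ /\ cos a < cos (φ + 2 * θ) /\ cos a < cos (φ + 4 * θ).
Proof.
  intros H.
  assert (H0 := H 0%nat ltac:(lia)); assert (H1 := H 1%nat ltac:(lia));
    assert (H2 := H 2%nat ltac:(lia)).
  replace (φ + 2 * INR 0 * θ) with φ in H0 by (simpl; ring).
  replace (φ + 2 * INR 1 * θ) with (φ + 2 * θ) in H1 by (simpl; ring).
  replace (φ + 2 * INR 2 * θ) with (φ + 4 * θ) in H2 by (simpl; ring).
  auto.
Qed.

(* With O_r = (0,0) and O_R = (-D,0), a is the half-angle of Γ_R seen from O_R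
   (law of cosines in the triangle O_r O_R corner): Γ_R = { |φ| < a }. *)
Definition lens_angle (D Rb a : R) : Prop :=
  0 < D /\ 0 < Rb /\ 0 < a < PI / 6 /\
  Rb ^ 2 + D ^ 2 - 1 = 2 * D * Rb * cos a /\ Rb <= 2 * D * cos a.

Lemma lens_angle_exists phis Rb :
  0 < phis < PI / 2 -> 332 / 10 * rr <= Rb ->
  exists a, lens_angle (dOO phis Rb) Rb a.
Proof.
  intros Hphis HRb; unfold rr in HRb.
  assert (HPI := PI_RGT_0).
  assert (Hs : 0 < sin phis) by (apply sin_gt_0; lra).
  assert (Hc : 0 < cos phis) by (apply cos_gt_0; lra).
  assert (Hsc := cos_sin_sq phis).
  set (W := sqrt (Rb ^ 2 - rr ^ 2 * sin phis ^ 2)).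
  assert (HW2 : W ^ 2 = Rb ^ 2 - sin phis ^ 2).
  { unfold W, rr; rewrite <- Rsqr_pow2, Rsqr_sqrt by nra; ring. }
  assert (HW : 0 <= W) by apply sqrt_pos.
  assert (HD : dOO phis Rb = W - cos phis) by (unfold dOO, W, rr; ring).
  set (k := W / Rb).
  assert (HkW : k * Rb = W) by (unfold k; field; lra).
  assert (HWR : W <= Rb) by nra.
  assert (Hk : 0 <= k <= 1) by (split; nra).
  exists (acos k).
  unfold lens_angle; rewrite HD, cos_acos by lra.
  assert (Hab := acos_bound k).
  assert (Hk3 : 3 < 4 * k ^ 2) by nra.
  repeat split; try nra.
  - destruct (Rle_lt_or_eq_dec _ _ (proj1 Hab)) as [h|h]; [exact h|].
    assert (Hk1 := cos_acos k ltac:(lra)); rewrite <- h, cos_0 in Hk1; nra.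
  - destruct (Rlt_or_le (acos k) (PI / 6)) as [h|h]; [exact h|].
    assert (Hle : cos (acos k) <= cos (PI / 6)).
    { destruct (Rle_lt_or_eq_dec _ _ h) as [h'|h'].
      - left; apply cos_decreasing_1; lra.
      - rewrite h'; lra. }
    rewrite cos_PI6, cos_acos in Hle by lra.
    assert (sqrt 3 * sqrt 3 = 3) by (apply sqrt_sqrt; lra).
    nra.
  - assert (HW1 : Rb - 1 <= W) by nra.
    assert (Rb * Rb <= 2 * (W - cos phis) * W) by nra.
    rewrite <- HkW in *; nra.
Qed.

Section Lens.

Variables phis Rb a : R.
Hypothesis Hlens : lens_angle (dOO phis Rb) Rb a.
Local Notation D := (dOO phis Rb).

(* For Q = (-D + Rb cos φ, Rb sin φ) on the big circle, u = (sin (θ - φ), cos (θ - φ))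
   and P = Q - t u, these expand |P|^2 - 1, |P - O_R|^2 and -<u, P>;
   note <u, Q> = Rb sin θ - D sin (θ - φ). *)
Lemma chord_coordinates φ θ t px py :
  px = - D + Rb * cos φ - t * sin (θ - φ) ->
  py = Rb * sin φ - t * cos (θ - φ) ->
  px ^ 2 + py ^ 2 - 1
    = t ^ 2 - 2 * (Rb * sin θ - D * sin (θ - φ)) * t + 2 * D * Rb * (cos a - cos φ) /\
  (px + D) ^ 2 + py ^ 2 = Rb ^ 2 - 2 * t * Rb * sin θ + t ^ 2 /\
  - (sin (θ - φ) * px + cos (θ - φ) * py) = t - (Rb * sin θ - D * sin (θ - φ)).
Proof.
  destruct Hlens as (_ & _ & _ & Hlaw & _); intros Hpx Hpy.
  assert (Hproj : sin (θ - φ) * cos φ + cos (θ - φ) * sin φ = sin θ).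
  { rewrite <- sin_plus; f_equal; ring. }
  assert (Hφ := cos_sin_sq φ); assert (Hu := cos_sin_sq (θ - φ)).
  subst px py; rewrite <- Hproj.
  repeat split.
  - transitivity (Rb ^ 2 * (cos φ ^ 2 + sin φ ^ 2) + D ^ 2 - 1 - 2 * D * Rb * cos φ
      - 2 * t * (Rb * (sin (θ - φ) * cos φ + cos (θ - φ) * sin φ) - D * sin (θ - φ))
      + t ^ 2 * (cos (θ - φ) ^ 2 + sin (θ - φ) ^ 2)); [ring|].
    rewrite Hφ, Hu; lra.
  - transitivity (Rb ^ 2 * (cos φ ^ 2 + sin φ ^ 2)
      - 2 * t * Rb * (sin (θ - φ) * cos φ + cos (θ - φ) * sin φ)
      + t ^ 2 * (cos (θ - φ) ^ 2 + sin (θ - φ) ^ 2)); [ring|].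
    rewrite Hφ, Hu; ring.
  - transitivity (t * (cos (θ - φ) ^ 2 + sin (θ - φ) ^ 2)
      - (Rb * (sin (θ - φ) * cos φ + cos (θ - φ) * sin φ) - D * sin (θ - φ))); [ring|].
    rewrite Hu; ring.
Qed.

Lemma chord_length_bound φ θ t px py :
  0 < θ < PI ->
  cos a < cos φ -> cos a < cos (φ + 2 * θ) -> cos a < cos (φ + 4 * θ) ->
  0 < t ->
  px = - D + Rb * cos φ - t * sin (θ - φ) ->
  py = Rb * sin φ - t * cos (θ - φ) ->
  px ^ 2 + py ^ 2 = 1 -> (px + D) ^ 2 + py ^ 2 <= Rb ^ 2 ->
  t < 2 / 3 * (- (sin (θ - φ) * px + cos (θ - φ) * py)) + 2 / 3 * (Rb * sin θ).
Proof.
  intros Hθ H0 H2 H4 Ht Hpx Hpy Hunit Hbig.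
  destruct (chord_coordinates φ θ t px py Hpx Hpy) as (Hpow & Hdist & Hdot).
  destruct Hlens as (HD & HRb & Ha & _ & Hwide).
  assert (HPI := PI_RGT_0).
  assert (Hca : 0 < cos a) by (apply cos_gt_0; lra).
  assert (HS : 0 < sin θ) by (apply sin_gt_0; lra).
  assert (HDR : 0 < D * Rb) by nra.
  assert (Hback : cos (φ - 2 * θ) = cos φ - 2 * sin θ * sin (θ - φ)).
  { replace (φ - 2 * θ) with (- ((θ - φ) + θ)) by ring.
    replace φ with (θ - (θ - φ)) at 2 by ring.
    rewrite cos_neg, cos_plus, (cos_minus θ (θ - φ)); ring. }
  rewrite Hdot.
  set (b := Rb * sin θ - D * sin (θ - φ)) in *.
  set (g := 2 * D * Rb * (cos a - cos φ)) in *.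
  assert (Hroot : t ^ 2 - 2 * b * t + g = 0) by lra.
  assert (Hg : g < 0) by (unfold g; nra).
  assert (Hbigt : t <= 2 * Rb * sin θ) by nra.
  (* P lies in the big disk, so the second intersection of the chord's line with
     the big circle, at angle φ - 2θ, lies outside Γ_R *)
  assert (Hout : cos (φ - 2 * θ) <= cos a).
  { assert (Hf := quadratic_nonneg_beyond_root b g t (2 * Rb * sin θ) Hg Ht Hbigt Hroot).
    replace ((2 * Rb * sin θ) ^ 2 - 2 * b * (2 * Rb * sin θ) + g)
      with (2 * D * Rb * (cos a - cos (φ - 2 * θ))) in Hf
      by (rewrite Hback; unfold b, g; ring).
    nra. }
  assert (Hrot := arc_rotation_bound a φ θ Ha Hθ H0 H2 H4 Hout).
  assert (HDv : Rb * sin θ < D * sin (θ - φ)) by nra.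
  enough (t < 2 * D * sin (θ - φ)) by (unfold b; lra).
  apply (quadratic_root_lt b g); [exact Hg | exact Ht | nra | exact Hroot |].
  rewrite Hback in Hout; unfold b, g; nra.
Qed.

Lemma big_arc_cos y : sd y = SR -> on_arc_open phis Rb y -> cos a < cos (phi y).
Proof.
  destruct Hlens as (HD & HRb & _ & Hlaw & _); intros Hy Hopen.
  unfold on_arc_open in Hopen; rewrite Hy, base_big in Hopen by exact Hy.
  apply sq_lt_of_edist_lt in Hopen; cbn [fst snd radius center other] in Hopen.
  unfold rr in Hopen.
  assert (Hsq := cos_sin_sq (phi y)).
  assert (HDR : 0 < D * Rb) by nra.
  assert (D * Rb * cos a < D * Rb * cos (phi y)) by nra.
  nra.
Qed.

Lemma chord_into_big_arc x0 x1 :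
  Fstep phis Rb x0 x1 -> sd x0 = Sr -> sd x1 = SR ->
  (forall j, (j <= 2)%nat -> cos a < cos (phi x1 + 2 * INR j * theta x1)) ->
  edist (base phis Rb x0) (base phis Rb x1)
    < 2 / 3 * (rr * sin (theta x0)) + 2 / 3 * (Rb * sin (theta x1)).
Proof.
  intros (_ & Hθ1 & Hclosed & _ & (t & Ht & Hchord) & Hrefl) Hx0 Hx1 Harc.
  rewrite Hchord, edist_along by (apply dir_unit || lra).
  assert (Hu := incoming_dir _ _ Hrefl).
  rewrite sin_theta_dir, Hu; cbn [fst snd].
  unfold on_arc_closed in Hclosed; rewrite Hx0, base_small in Hclosed by exact Hx0.
  apply sq_le_of_edist_le in Hclosed; cbn [fst snd radius center other] in Hclosed.
  rewrite Hu, (base_small _ _ x0 Hx0), (base_big _ _ x1 Hx1) in Hchord.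
  injection Hchord as E1 E2.
  unfold rr; rewrite Rmult_1_l.
  assert (Hs := cos_sin_sq (phi x0)).
  destruct (cos_lt_first_rotations _ _ _ Harc) as (H0 & H2 & H4).
  apply (chord_length_bound (phi x1) (theta x1) t (cos (phi x0)) (sin (phi x0)));
    auto; lra.
Qed.

Lemma chord_out_of_big_arc y z :
  Fstep phis Rb y z -> sd y = SR -> sd z = Sr ->
  (forall i, (i <= 2)%nat -> cos a < cos (phi y - 2 * INR i * theta y)) ->
  edist (base phis Rb y) (base phis Rb z)
    < 2 / 3 * (Rb * sin (theta y)) + 2 / 3 * (rr * sin (theta z)).
Proof.
  intros (Hθy & _ & _ & Hopen & (t & Ht & Hchord) & Hrefl) Hy Hz Harc.
  rewrite Hchord, edist_along by (apply dir_unit || lra).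
  assert (Hu := incoming_dir _ _ Hrefl).
  assert (Hz2 : sin (theta z) = fst (dir y) * cos (phi z) + snd (dir y) * sin (phi z)).
  { rewrite Hu; cbn [fst snd].
    replace (theta z) with ((theta z - phi z) + phi z) at 1 by ring.
    apply sin_plus. }
  unfold on_arc_open in Hopen; rewrite Hz, base_small in Hopen by exact Hz.
  apply Rlt_le, sq_le_of_edist_le in Hopen; cbn [fst snd radius center other] in Hopen.
  rewrite Hz2, dir_angle; rewrite dir_angle in Hchord; cbn [fst snd].
  rewrite (base_small _ _ z Hz), (base_big _ _ y Hy) in Hchord.
  injection Hchord as E1 E2.
  unfold rr; rewrite Rmult_1_l.
  (* under the mirror (u, v) ↦ (u, -v) the reversed chord enters Γ_R at angle -φ *)
  assert (Hmirror := chord_length_bound (- phi y) (theta y) t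
                       (cos (phi z)) (- sin (phi z))).
  replace (theta y - - phi y) with (phi y + theta y) in Hmirror by ring.
  rewrite cos_neg, sin_neg in Hmirror.
  assert (Harc' : forall i, (i <= 2)%nat -> cos a < cos (- phi y + 2 * INR i * theta y)).
  { intros i Hi; rewrite <- (cos_neg (- phi y + _)).
    replace (- (- phi y + 2 * INR i * theta y)) with (phi y - 2 * INR i * theta y) by ring.
    now apply Harc. }
  destruct (cos_lt_first_rotations _ _ _ Harc') as (H0 & H2 & H4).
  rewrite cos_neg in H0.
  assert (Hs := cos_sin_sq (phi z)).
  enough (t < 2 / 3 * (- (sin (phi y + theta y) * cos (phi z) + cos (phi y + theta y) * - sin (phi z)))
              + 2 / 3 * (Rb * sin (theta y))) by lra.
  apply Hmirror; auto; lra.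
Qed.

End Lens.

Lemma big_arc_stay (ys : nat -> state) (n : nat) :
  sd (ys 0%nat) = SR -> (forall j, (j < n)%nat -> ~ in_MR_out ys j) ->
  forall j, (j <= n)%nat -> sd (ys j) = SR.
Proof.
  intros H0 Hstay j; induction j as [|j IH]; intros Hj; [exact H0|].
  destruct (sd (ys (S j))) eqn:E; [|reflexivity].
  exfalso; apply (Hstay j); [lia|].
  split; [apply IH; lia | exact E].
Qed.

Section BigArcRun.

Variables (phis Rb a : R) (ys : nat -> state) (n : nat).
Hypothesis HRb : 0 < Rb.
Hypothesis Hsteps : forall j, (j < n)%nat -> Fstep phis Rb (ys j) (ys (S j)).
Hypothesis Hbig : forall j, (j <= n)%nat -> sd (ys j) = SR.
Hypothesis Hin : forall j, (j <= n)%nat -> cos a < cos (phi (ys j)).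

Lemma big_arc_rotation j : (j <= n)%nat ->
  angle_eq (theta (ys j)) (theta (ys 0%nat)) /\
  angle_eq (phi (ys j)) (phi (ys 0%nat) + 2 * INR j * theta (ys 0%nat)).
Proof.
  induction j as [|j IH]; intros Hj.
  - split; [apply angle_eq_refl|].
    simpl INR; rewrite Rmult_0_r, Rmult_0_l, Rplus_0_r; apply angle_eq_refl.
  - destruct (IH ltac:(lia)) as [Hθ Hφ].
    destruct (big_circle_step phis Rb _ _ HRb (Hsteps j ltac:(lia))
                (Hbig j ltac:(lia)) (Hbig (S j) Hj)) as [Hφ' Hθ'].
    split; [exact (angle_eq_trans _ _ _ Hθ' Hθ)|].
    apply (angle_eq_trans _ _ _ Hφ').
    rewrite S_INR.
    replace (phi (ys 0%nat) + 2 * (INR j + 1) * theta (ys 0%nat))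
      with (phi (ys 0%nat) + 2 * INR j * theta (ys 0%nat) + INR 2 * theta (ys 0%nat))
      by (simpl; ring).
    replace (2 * theta (ys j)) with (INR 2 * theta (ys j)) by (simpl; ring).
    exact (angle_eq_add _ _ _ _ Hφ (angle_eq_mul_nat 2 _ _ Hθ)).
Qed.

Lemma big_arc_forward j : (j <= n)%nat ->
  cos a < cos (phi (ys 0%nat) + 2 * INR j * theta (ys 0%nat)).
Proof.
  intros Hj; rewrite <- (proj1 (proj2 (big_arc_rotation j Hj))); exact (Hin j Hj).
Qed.

Lemma big_arc_backward i : (i <= n)%nat ->
  cos a < cos (phi (ys n) - 2 * INR i * theta (ys n)).
Proof.
  intros Hi.
  destruct (big_arc_rotation n (le_n n)) as [Hθn Hφn].
  destruct (big_arc_rotation (n - i) ltac:(lia)) as [_ Hφi].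
  rewrite minus_INR in Hφi by exact Hi.
  enough (Hback : angle_eq (phi (ys n) - 2 * INR i * theta (ys n)) (phi (ys (n - i)%nat))).
  { rewrite (proj1 Hback); apply Hin; lia. }
  apply (angle_eq_trans _ (phi (ys 0%nat) + 2 * INR n * theta (ys 0%nat)
                            - 2 * INR i * theta (ys 0%nat))).
  - unfold Rminus; apply (angle_eq_add _ _ _ _ Hφn), angle_eq_opp.
    replace (2 * INR i * theta (ys n)) with (INR (2 * i) * theta (ys n))
      by (rewrite mult_INR; simpl; ring).
    replace (2 * INR i * theta (ys 0%nat)) with (INR (2 * i) * theta (ys 0%nat))
      by (rewrite mult_INR; simpl; ring).
    now apply angle_eq_mul_nat.
  - apply angle_eq_sym; replace (phi (ys 0%nat) + 2 * INR n * theta (ys 0%nat) - 2 * INR i * theta (ys 0%nat))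
      with (phi (ys 0%nat) + 2 * (INR n - INR i) * theta (ys 0%nat)) by ring.
    exact Hφi.
Qed.

End BigArcRun.

Theorem mainTheorem10 :
  forall (phis Rb : R),
    0 < phis < PI / 2 ->
    332 / 10 * rr <= Rb ->
    forall (xs : nat -> state) (n0 n1 : nat),
      (forall k : nat, (k < n0 + 1 + n1 + 1)%nat -> Fstep phis Rb (xs k) (xs (S k))) ->
      sd (xs 0%nat) = Sr ->
      in_Mr_out xs n0 ->
      (forall k : nat, (k < n0)%nat -> ~ in_Mr_out xs k) ->
      in_MR_out xs (n0 + 1 + n1)%nat ->
      (forall m : nat, (m < n1)%nat -> ~ in_MR_out xs (n0 + 1 + m)%nat) ->
      (2 <= n1)%nat ->
      let d0 := rr * sin (theta (xs n0)) in
      let d1 := Rb * sin (theta (xs (n0 + 1)%nat)) in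
      let d2 := rr * sin (theta (xs (n0 + 1 + n1 + 1)%nat)) in
      let tau0 := edist (base phis Rb (xs n0)) (base phis Rb (xs (n0 + 1)%nat)) in
      let tau1 := edist (base phis Rb (xs (n0 + 1 + n1)%nat))
                       (base phis Rb (xs (n0 + 1 + n1 + 1)%nat)) in
      tau0 < 2 / 3 * d0 + 2 / 3 * d1 /\ tau1 < 2 / 3 * d1 + 2 / 3 * d2.
Proof.
  intros phis Rb Hphis HRb xs n0 n1 HF _ [Hx0 Hx1] _ [_ Hx2] Hstay Hn1; cbv zeta.
  destruct (lens_angle_exists phis Rb Hphis HRb) as [a Hlens].
  assert (HRb0 : 0 < Rb) by apply Hlens.
  (* ys j = F^j x_1 runs along Γ_R for j <= n1 *)
  pose (ys j := xs (j + S n0)%nat).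
  replace (n0 + 1 + n1 + 1)%nat with (S (n1 + S n0)) in * by lia.
  replace (n0 + 1 + n1)%nat with (n1 + S n0)%nat in * by lia.
  replace (n0 + 1)%nat with (S n0) by lia.
  change (xs (S n0)) with (ys 0%nat); change (xs (n1 + S n0)%nat) with (ys n1).
  assert (Hsteps : forall j, (j < n1)%nat -> Fstep phis Rb (ys j) (ys (S j)))
    by (intros j Hj; apply HF; lia).
  assert (Hbig : forall j, (j <= n1)%nat -> sd (ys j) = SR).
  { apply big_arc_stay; [exact Hx1|].
    intros j Hj; unfold in_MR_out, ys; cbn [Nat.add].
    replace (j + S n0)%nat with (n0 + 1 + j)%nat by lia; apply Hstay, Hj. }
  assert (Hin : forall j, (j <= n1)%nat -> cos a < cos (phi (ys j))).
  { intros j Hj; destruct (HF (j + n0)%nat ltac:(lia)) as (_ & _ & _ & Hopen & _).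
    unfold ys; rewrite Nat.add_succ_r.
    apply (big_arc_cos phis Rb a Hlens); [rewrite <- Nat.add_succ_r; now apply Hbig | exact Hopen]. }
  split.
  - apply (chord_into_big_arc phis Rb a Hlens); [apply HF; lia | exact Hx0 | exact Hx1 |].
    intros j Hj; apply (big_arc_forward phis Rb a ys n1); auto; lia.
  - destruct (big_arc_rotation phis Rb ys n1 HRb0 Hsteps Hbig n1 (le_n n1)) as [[_ Hθ] _].
    rewrite <- Hθ.
    apply (chord_out_of_big_arc phis Rb a Hlens); [apply HF; lia | apply Hbig; lia | exact Hx2 |].
    intros i Hi; apply (big_arc_backward phis Rb a ys n1); auto; lia.
Qed.
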